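(* Let $A\in {\operatorname{\mathsf{TPD}}}_n(\mathbb{S}_{\max}^\vee)$, set $\gamma_i=a_{ii}$ ordered so that $\gamma_1\succeq\cdots\succeq\gamma_n$, let $\gamma=\gamma_k$ and $B=B_k=\gamma_k I\ominus A$. Assume that $\gamma$ is a simple $\mathbb{S}_{\max}$-eigenvalue. Let \[ v^{(k)}:= (B_k)_{:,k}^{\mathrm{adj}}. \] Then we have the following properties: \begin{enumerate} \item $v^{(k)}$ is a weak $\mathbb{S}_{\max}$-eigenvector associated to $\gamma$, such that $v^{(k)}_k\in\mathbb{S}_{\max}^\vee\setminus\{\mathbf{0}\}$. \item There exists a $\mathbb{S}_{\max}$-eigenvector $v$ associated to $\gamma$ such that $|v|=|v^{(k)}|$ and $v_i=v^{(k)}_i$ for all $i\in [n]$ satisfying $v^{(k)}_i\in\mathbb{S}_{\max}^\vee$, in particular for $i=k$. \item Any $\mathbb{S}_{\max}$-eigenvector $v$ associated to $\gamma$ satisfies $v\,\nabla\, \lambda v^{(k)}$ for some $\lambda\in \mathbb{S}_{\max}^{\vee}\setminus\{\mathbf{0}\}$. \end{enumerate}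
   Context: $\mathbb{S}_{\max}$ is the symmetrized tropical semiring over a divisible totally ordered abelian group, with zero $\mathbf{0}$, unit $\mathbf{1}$, minus $\ominus$, modulus $|\cdot|$; $\mathbb{S}_{\max}^\vee$ is the set of signed elements; $a\,\nabla\, b$ iff $a\ominus b$ is balanced; $a\preceq b$ iff $b=a\oplus b$. $A\in{\operatorname{\mathsf{TPD}}}_n(\mathbb{S}_{\max}^\vee)$: $A$ symmetric with signed entries, $\mathbf{0}<a_{ii}$ and $a_{ij}^2<a_{ii}a_{jj}$ for $i\ne j$ (where $a<b$ iff $b\ominus a$ is positive). Its $\mathbb{S}_{\max}$-eigenvalues are its diagonal entries; $\gamma_k$ simple means it occurs once on the diagonal. $(M^{\mathrm{adj}})_{ij}=(\ominus\mathbf{1})^{i+j}\det M[\hat j,\hat i]$ (signed determinant), $M_{:,k}$ the $k$-th column. An $\mathbb{S}_{\max}$-eigenvector for $\gamma$ is $v\in(\mathbb{S}_{\max}^\vee)^n\setminus\{\mathbf{0}\}$ with $Av\,\nabla\,\gamma v$; a weak $\mathbb{S}_{\max}$-eigenvector is $v\in\mathbb{S}_{\max}^n$ with at least one coordinate in $\mathbb{S}_{\max}^\vee\setminus\{\mathbf{0}\}$ and $Av\,\nabla\,\gamma v$. *)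

From HB Require Import structures.
From mathcomp Require Import all_boot all_order all_algebra all_fingroup.
Set Implicit Arguments. Unset Strict Implicit. Unset Printing Implicit Defensive.
Import Order.TTheory GRing.Theory Num.Theory.
Local Open Scope ring_scope.

Definition divOAG (G : porderZmodType) : Prop :=
  [/\ (forall x y : G, (x <= y) || (y <= x)),
      (forall x y z : G, x <= y -> x + z <= y + z) &
      (forall (m : nat) (x : G), (0 < m)%N -> exists y : G, y *+ m = x)].

(* Elements of S_max: 0 (= -oo), a (positive), (-)a (negative), a^. (balanced),
   for a in G. *)
Inductive smax (G : Type) : Type :=
  | SZero | SPos of G | SNeg of G | SBal of G.
Arguments SZero {G}.

Section Smax.
Variable G : porderZmodType.
Implicit Types a b : smax G.

(* modulus in G (only meaningful for non-zero elements) *)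
Definition smodg a : G :=
  match a with SZero => 0 | SPos x => x | SNeg x => x | SBal x => x end.

Definition splus a b : smax G :=
  match a, b with
  | SZero, _ => b
  | _, SZero => a
  | _, _ =>
    let x := smodg a in let y := smodg b in
    if x == y then
      match a, b with
      | SPos _, SPos _ => a
      | SNeg _, SNeg _ => a
      | _, _ => SBal x
      end
    else if x < y then b else a
  end.

Definition stimes a b : smax G :=
  match a, b with
  | SZero, _ => SZero
  | _, SZero => SZero
  | SBal x, _ => SBal (x + smodg b)
  | _, SBal y => SBal (smodg a + y)
  | SPos x, SPos y => SPos (x + y)
  | SNeg x, SNeg y => SPos (x + y)
  | SPos x, SNeg y => SNeg (x + y)
  | SNeg x, SPos y => SNeg (x + y)
  end.

Definition sone : smax G := SPos 0.

Definition sopp a : smax G :=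
  match a with SZero => SZero | SPos x => SNeg x | SNeg x => SPos x | SBal x => SBal x end.

Definition sabs a : smax G := match a with SZero => SZero | _ => SPos (smodg a) end.

Definition sbalanced a : Prop := sopp a = a.
Definition ssigned a : Prop := match a with SBal _ => False | _ => True end.
Definition spositive a : Prop := match a with SPos _ => True | _ => False end.

Definition snabla a b : Prop := sbalanced (splus a (sopp b)).
Definition slt a b : Prop := spositive (splus b (sopp a)).
Definition sle a b : Prop := b = splus a b.

Definition ssignn (m : nat) : smax G := if odd m then sopp sone else sone.

Definition sdet (m : nat) (M : 'M[smax G]_m) : smax G :=
  \big[splus/SZero]_(s : 'S_m)
     stimes (ssignn (odd_perm s)) (\big[stimes/sone]_(i < m) M i (s i)).

Definition sadj (m : nat) (M : 'M[smax G]_m) : 'M[smax G]_m :=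
  \matrix_(i < m, j < m) stimes (ssignn (i + j)) (sdet (row' j (col' i M))).

Definition smulv (m : nat) (M : 'M[smax G]_m) (v : 'I_m -> smax G) (i : 'I_m) :=
  \big[splus/SZero]_(j < m) stimes (M i j) (v j).

Definition sshift (m : nat) (g : smax G) (M : 'M[smax G]_m) : 'M[smax G]_m :=
  \matrix_(i < m, j < m) splus (if i == j then g else SZero) (sopp (M i j)).

Definition tpd (m : nat) (A : 'M[smax G]_m) : Prop :=
  [/\ (forall i j, A i j = A j i),
      (forall i j, ssigned (A i j)),
      (forall i, slt SZero (A i i)) &
      (forall i j, i != j -> slt (stimes (A i j) (A i j)) (stimes (A i i) (A j j)))].

Definition seigvec (m : nat) (A : 'M[smax G]_m) (g : smax G) (v : 'I_m -> smax G) : Prop :=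
  [/\ (forall i, ssigned (v i)), (exists i, v i <> SZero) &
      (forall i, snabla (smulv A v i) (stimes g (v i)))].

Definition sweak_eigvec (m : nat) (A : 'M[smax G]_m) (g : smax G) (v : 'I_m -> smax G) : Prop :=
  (exists i, ssigned (v i) /\ v i <> SZero) /\
  (forall i, snabla (smulv A v i) (stimes g (v i))).

End Smax.

(* Write B = γI ⊖ A and t for the k-th column of adj B, so that t j is a
   signed sum, over the permutations s with s k = j, of the products of the
   B x (s x) for x ≠ k.  Tropical positive definiteness gives
   2|b_ij| < |b_ii| + |b_jj| for i ≠ j, so on every union of cycles a
   permutation weighs at most the diagonal, strictly if it moves a point.
   Hence t k is the product of the signed diagonal entries, row k of B ⊗ t is
   dominated by the balanced term b_kk t_k, and for j ≠ k the permutations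
   moving j contribute negligibly to row j, which yields the exact identity
   ⊕_{l ≠ j} ⊖ b_jl t_l = b_jj t_j.  Along a "tight" step j → l of this
   identity the potential |b_jj| + 2|x_j| strictly increases, so any argument
   by propagation along tight steps terminates.  Uniqueness compares an
   eigenvector v with λ t, λ = v_k t_k^{-1}, along such steps; existence
   propagates signs back from k along a choice of tight successors. *)

From HB Require Import structures.
From mathcomp Require Import all_boot all_order all_algebra all_fingroup.
From mathcomp Require Import zify.
From Stdlib Require Import Classical.

Set Implicit Arguments. Unset Strict Implicit. Unset Printing Implicit Defensive.
Import Order.TTheory GRing.Theory.
Local Open Scope ring_scope.

Notation "a ⊕ b" := (splus a b) (at level 50, left associativity).
Notation "a ⊗ b" := (stimes a b) (at level 40, left associativity).
Notation "⊖ a" := (sopp a) (at level 35, right associativity).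
Notation "\ssum_ ( i | P ) F" := (\big[@splus _/SZero]_(i | P) F)
  (at level 41, F at level 41, i, P at level 50).
Notation "\ssum_ ( i : T | P ) F" := (\big[@splus _/SZero]_(i : T | P) F)
  (at level 41, F at level 41, i, T, P at level 50).
Notation "\ssum_ i F" := (\big[@splus _/SZero]_i F)
  (at level 41, F at level 41, i at level 0).
Notation "\sprod_ ( i | P ) F" := (\big[@stimes _/sone _]_(i | P) F)
  (at level 36, F at level 36, i, P at level 50).

Lemma lift_perm_onto n (i j : 'I_n.+1) :
  {on [pred s : 'S_n.+1 | s i == j], bijective (lift_perm i j)}.
Proof.
pose f (s : 'S_n.+1) (x : 'I_n) := odflt x (unlift (s i) (s (lift i x))).
have fK (s : 'S_n.+1) x : lift (s i) (f s x) = s (lift i x).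
  have /unlift_some[y e1 e2] : s i != s (lift i x) by rewrite (inj_eq perm_inj) neq_lift.
  by rewrite /f e2 e1.
have f_inj (s : 'S_n.+1) : injective (f s).
  by move=> x y /(congr1 (lift (s i))); rewrite !fK => /perm_inj /lift_inj.
exists (fun s => perm (f_inj s)) => [s _ | s /eqP si]; apply/permP => x.
  by rewrite permE /f lift_perm_id lift_perm_lift liftK.
case: (unliftP i x) => [y|] ->; last by rewrite lift_perm_id si.
by rewrite lift_perm_lift permE -si fK.
Qed.

Section SymmetrizedMaxPlus.
Variable G : porderZmodType.
Hypothesis HG : divOAG G.
Implicit Types (a b c y : smax G) (u v z : G).

Lemma comparableG u v : u >=< v.
Proof. by case: HG => h _ _; exact: h. Qed.

Lemma leD2r u v z : (u + z <= v + z) = (u <= v).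
Proof.
case: HG => _ h _; apply/idP/idP; last exact: h.
by move=> /(h _ _ (- z)); rewrite !addrK.
Qed.

Lemma ltD2r u v z : (u + z < v + z) = (u < v).
Proof. by rewrite !lt_def leD2r (inj_eq (addIr z)). Qed.

Lemma leD2l u v z : (z + u <= z + v) = (u <= v).
Proof. by rewrite ![z + _]addrC leD2r. Qed.

Lemma ltD2l u v z : (z + u < z + v) = (u < v).
Proof. by rewrite ![z + _]addrC ltD2r. Qed.

Lemma eqD2r u v z : (u + z == v + z) = (u == v).
Proof. exact: (inj_eq (addIr z)). Qed.

Lemma eqD2l u v z : (z + u == z + v) = (u == v).
Proof. exact: (inj_eq (addrI z)). Qed.

Lemma ltNgeG u v : (u < v) = ~~ (v <= u).
Proof. exact/comparable_ltNge/comparableG. Qed.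

Lemma leNgtG u v : (u <= v) = ~~ (v < u).
Proof. by rewrite ltNgeG negbK. Qed.

Lemma leD u v u' v' : u <= v -> u' <= v' -> u + u' <= v + v'.
Proof. by move=> h h'; apply: (@le_trans _ _ (v + u')); rewrite ?leD2r ?leD2l. Qed.

Lemma ltD_le u v u' v' : u < v -> u' <= v' -> u + u' < v + v'.
Proof. by move=> h h'; apply: (@lt_le_trans _ _ (v + u')); rewrite ?ltD2r ?leD2l. Qed.

Lemma le_of_double u v : u *+ 2 <= v *+ 2 -> u <= v.
Proof.
move=> h; rewrite leNgtG; apply: contraTN h => vu.
by rewrite -ltNgeG !mulr2n; apply: ltD_le => //; apply: ltW.
Qed.

Lemma lt_of_double u v : u *+ 2 < v *+ 2 -> u < v.
Proof.
move=> h; rewrite ltNgeG; apply: contraTN h => vu.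
by rewrite -leNgtG !mulr2n; apply: leD.
Qed.

Lemma le_sum (I : finType) (P : pred I) (f g : I -> G) :
  (forall i, P i -> f i <= g i) -> \sum_(i | P i) f i <= \sum_(i | P i) g i.
Proof. by move=> h; elim/big_rec2: _ => // i u v Pi; apply: leD; apply: h. Qed.

Lemma lt_sum (I : finType) (P : pred I) (f g : I -> G) :
  (forall i, P i -> f i <= g i) -> (exists2 i, P i & f i < g i) ->
  \sum_(i | P i) f i < \sum_(i | P i) g i.
Proof.
move=> h [i Pi lt]; rewrite (bigD1 i) //= [X in _ < X](bigD1 i) //=.
by apply: ltD_le => //; apply: le_sum => j /andP[Pj _]; apply: h.
Qed.

Lemma lt_transfer (u o x y x' y' : G) :
  u + x <= o + y -> o + y' <= u + x' -> x' < x -> y' < y.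
Proof.
move=> h1 h2 lt; have := leD h1 h2.
have -> : u + x + (o + y') = x + y' + (u + o) by rewrite addrACA addrC.
have -> : o + y + (u + x') = y + x' + (u + o) by rewrite addrACA addrC [o + u]addrC.
rewrite leD2r => h; rewrite -(ltD2l _ _ x); apply: le_lt_trans h _.
by rewrite [x + y]addrC ltD2l.
Qed.

Definition above (I : finType) (h : I -> G) (j : I) := [pred l | h j < h l].

Lemma card_above_lt (I : finType) (h : I -> G) j l :
  h j < h l -> (#|above h l| < #|above h j|)%N.
Proof.
move=> jl; apply: proper_card; apply/properP; split.
  by apply/subsetP => x; rewrite !inE; apply: lt_trans.
by exists l; rewrite !inE ?ltxx.
Qed.

Lemma card_above_ltn (I : finType) (h : I -> G) j : (#|above h j| < #|I|)%N.
Proof.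
apply: proper_card; apply/properP; split; first exact: subset_predT.
by exists j; rewrite ?inE ?ltxx.
Qed.

Lemma no_ascending_chain (I : finType) (P : I -> Prop) (h : I -> G) :
  (forall j, P j -> exists2 l, P l & h j < h l) -> forall j, ~ P j.
Proof.
move=> step j; move: {2}#|above h j|.+1 (ltnSn #|above h j|) => N.
elim: N j => [//|N IH] j aj Pj; have [l Pl jl] := step j Pj.
by apply: (IH l) => //; apply: leq_trans (card_above_lt jl) _.
Qed.

Lemma potential_step (u v o p q : G) :
  o *+ 2 < u + v -> u + p <= o + q -> u + p *+ 2 < v + q *+ 2.
Proof.
move=> ouv uo.
have h1 : (u + p) *+ 2 <= (o + q) *+ 2 by rewrite !mulr2n; apply: leD.
have h2 : (o + q) *+ 2 < u + v + q *+ 2 by rewrite mulrnDl ltD2r.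
have := le_lt_trans h1 h2.
by rewrite mulrnDl [u *+ 2]mulr2n -!addrA ltD2l.
Qed.

Ltac cmp_case :=
  match goal with
  | |- context [?u == ?v] => case: (comparable_ltgtP (comparableG u v)) => ?; try subst
  end.

Ltac absurd_lt :=
  match goal with
  | H : is_true (?u < ?u) |- _ => by rewrite ltxx in H
  | H1 : is_true (?u < ?v), H2 : is_true (?v < ?u) |- _ =>
      by move: (lt_trans H1 H2); rewrite ltxx
  | H1 : is_true (?u < ?v), H2 : is_true (?v <= ?u) |- _ =>
      by move: (lt_le_trans H1 H2); rewrite ltxx
  | H1 : is_true (?u < ?v), H2 : is_true (?v < ?w), H3 : is_true (?w < ?u) |- _ =>
      by move: (lt_trans (lt_trans H1 H2) H3); rewrite ltxx
  end.

Ltac smax_solve :=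
  repeat (first [ done | absurd_lt | progress simpl
                | progress rewrite ?eqD2r ?eqD2l ?ltD2r ?ltD2l
                | cmp_case | progress (intros; subst) | congruence ]).

Lemma splusC : commutative (@splus G).
Proof. by case=> [|u|u|u] [|v|v|v] //=; smax_solve. Qed.

Lemma splusA : associative (@splus G).
Proof. by case=> [|u|u|u] [|v|v|v] [|w|w|w] //=; smax_solve. Qed.

Lemma splus0l : left_id SZero (@splus G).
Proof. by []. Qed.

Lemma splus0r : right_id SZero (@splus G).
Proof. by case. Qed.

Lemma splusxx a : a ⊕ a = a.
Proof. by case: a => [|u|u|u] //=; rewrite eqxx. Qed.

Lemma stimesC : commutative (@stimes G).
Proof. by case=> [|u|u|u] [|v|v|v] //=; rewrite addrC. Qed.

Lemma stimesA : associative (@stimes G).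
Proof. by case=> [|u|u|u] [|v|v|v] [|w|w|w] //=; rewrite addrA. Qed.

Lemma stimes1l : left_id (sone G) (@stimes G).
Proof. by case=> [|u|u|u] //=; rewrite add0r. Qed.

Lemma stimes1r : right_id (sone G) (@stimes G).
Proof. by move=> a; rewrite stimesC stimes1l. Qed.

Lemma stimes0l : left_zero SZero (@stimes G).
Proof. by []. Qed.

Lemma stimes0r : right_zero SZero (@stimes G).
Proof. by case. Qed.

Lemma stimesDl : left_distributive (@stimes G) (@splus G).
Proof. by case=> [|u|u|u] [|v|v|v] [|w|w|w] //=; smax_solve. Qed.

Lemma stimesDr : right_distributive (@stimes G) (@splus G).
Proof. by move=> c a b; rewrite !(stimesC c) stimesDl. Qed.

#[local] HB.instance Definition _ :=
  Monoid.isComLaw.Build (smax G) SZero (@splus G) splusA splusC splus0l.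
#[local] HB.instance Definition _ :=
  Monoid.isComLaw.Build (smax G) (sone G) (@stimes G) stimesA stimesC stimes1l.
#[local] HB.instance Definition _ :=
  Monoid.isMulLaw.Build (smax G) SZero (@stimes G) stimes0l stimes0r.
#[local] HB.instance Definition _ :=
  Monoid.isAddLaw.Build (smax G) (@stimes G) (@splus G) stimesDl stimesDr.

Lemma soppD a b : ⊖ (a ⊕ b) = ⊖ a ⊕ ⊖ b.
Proof. by case: a b => [|u|u|u] [|v|v|v] //=; smax_solve. Qed.

Lemma soppK a : ⊖ ⊖ a = a.
Proof. by case: a. Qed.

Lemma soppMl a b : (⊖ a) ⊗ b = ⊖ (a ⊗ b).
Proof. by case: a b => [|u|u|u] [|v|v|v]. Qed.

Lemma soppMr a b : a ⊗ (⊖ b) = ⊖ (a ⊗ b).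
Proof. by rewrite stimesC soppMl stimesC. Qed.

Lemma sopp_eq0 a : ⊖ a = SZero <-> a = SZero.
Proof. by case: a. Qed.

Lemma smodgN a : smodg (⊖ a) = smodg a.
Proof. by case: a. Qed.

Lemma sopp_big (I : finType) (P : pred I) (f : I -> smax G) :
  ⊖ (\ssum_(i | P i) f i) = \ssum_(i | P i) ⊖ f i.
Proof. exact: (big_morph (@sopp G) soppD). Qed.

Lemma stimes_eq0 a b : a ⊗ b = SZero <-> a = SZero \/ b = SZero.
Proof.
split; last by case=> ->; rewrite ?stimes0r.
by case: a b => [|u|u|u] [|v|v|v] //=; auto.
Qed.

Lemma stimes_neq0 a b : a <> SZero -> b <> SZero -> a ⊗ b <> SZero.
Proof. by move=> ha hb /stimes_eq0 []. Qed.

Lemma smodgM a b : a <> SZero -> b <> SZero -> smodg (a ⊗ b) = smodg a + smodg b.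
Proof. by case: a b => [|u|u|u] [|v|v|v]. Qed.

Lemma eq0_dec a : {a = SZero} + {a <> SZero}.
Proof. by case: a => [|u|u|u]; [left|right..]. Qed.

Lemma sprod_neq0 (I : finType) (P : pred I) (F : I -> smax G) :
  (forall i, P i -> F i <> SZero) -> \sprod_(i | P i) F i <> SZero.
Proof.
move=> h; apply: (big_rec (fun s => s <> SZero)) => // i x Pi hx.
by apply: stimes_neq0 => //; apply: h.
Qed.

Lemma smodg_sprod (I : finType) (P : pred I) (F : I -> smax G) :
  (forall i, P i -> F i <> SZero) ->
  smodg (\sprod_(i | P i) F i) = \sum_(i | P i) smodg (F i).
Proof.
move=> h; move: (sprod_neq0 h).
apply: (big_rec2 (fun s t => s <> SZero -> smodg s = t)) => // i x y Pi hxy hx.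
have nx : x <> SZero by move=> x0; apply: hx; rewrite x0 stimes0r.
by rewrite smodgM ?hxy //; apply: h.
Qed.

Lemma sprod_lift n (i : 'I_n.+1) (F : 'I_n.+1 -> smax G) :
  \sprod_(x | x != i) F x = \sprod_(y | true) F (lift i y).
Proof.
rewrite (reindex_omap (lift i) (unlift i)) => [|x xi]; last first.
  by case: unliftP xi => [y ->|->] //; rewrite eqxx.
by apply: eq_bigl => y; rewrite eq_sym neq_lift liftK eqxx.
Qed.

Definition isbal a := if a is SPos _ then false else if a is SNeg _ then false else true.

Lemma sbalancedP a : reflect (sbalanced a) (isbal a).
Proof. by rewrite /sbalanced; case: a => [|u|u|u] /=; constructor. Qed.

Lemma sbalancedD a b : sbalanced a -> sbalanced b -> sbalanced (a ⊕ b).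
Proof.
move=> /sbalancedP ha /sbalancedP hb; apply/sbalancedP; move: ha hb.
by case: a b => [|u|u|u] [|v|v|v] //= _ _; smax_solve.
Qed.

Lemma sbalanced_big (I : finType) (P : pred I) (f : I -> smax G) :
  (forall i, P i -> sbalanced (f i)) -> sbalanced (\ssum_(i | P i) f i).
Proof.
move=> h; apply: (big_rec (fun s => sbalanced s)) => [|i x Pi hx]; first by [].
by apply: sbalancedD => //; apply: h.
Qed.

Lemma sbalancedMl a b : sbalanced a -> sbalanced (a ⊗ b).
Proof. by move=> /sbalancedP; case: a b => [|u|u|u] [|v|v|v]. Qed.

Lemma sbalancedMr a b : sbalanced b -> sbalanced (a ⊗ b).
Proof. by rewrite stimesC; apply: sbalancedMl. Qed.

Lemma sbalancedN a : sbalanced (⊖ a) <-> sbalanced a.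
Proof. by split=> /sbalancedP h; apply/sbalancedP; move: h; case: a. Qed.

Lemma sbalanced_subxx a : sbalanced (a ⊕ ⊖ a).
Proof. by apply/sbalancedP; case: a => [|u|u|u] //=; rewrite eqxx. Qed.

Lemma ssigned_nabla_eq a b : ssigned a -> ssigned b -> snabla a b -> a = b.
Proof. by move=> + + /sbalancedP; case: a b => [|u|u|u] [|v|v|v] //= _ _; smax_solve. Qed.

Lemma subxx_neq0 a : a <> SZero -> a ⊕ ⊖ a <> SZero.
Proof. by case: a => [|u|u|u] //= _; rewrite eqxx. Qed.

Lemma smodg_subxx a : smodg (a ⊕ ⊖ a) = smodg a.
Proof. by case: a => [|u|u|u] //=; rewrite eqxx. Qed.

Lemma ssignedN a : ssigned (⊖ a) <-> ssigned a.
Proof. by case: a. Qed.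

Lemma ssignedM a b : ssigned a -> ssigned b -> ssigned (a ⊗ b).
Proof. by case: a b => [|u|u|u] [|v|v|v]. Qed.

Lemma ssignedMr a b : a <> SZero -> ssigned (a ⊗ b) -> ssigned b.
Proof. by case: a b => [|u|u|u] [|v|v|v]. Qed.

Lemma ssigned_sprod (I : finType) (P : pred I) (F : I -> smax G) :
  (forall i, P i -> ssigned (F i)) -> ssigned (\sprod_(i | P i) F i).
Proof.
move=> h; apply: (big_rec (fun s => ssigned s)) => // i x Pi hx.
by apply: ssignedM => //; apply: h.
Qed.

Lemma ssignn_odd m : ssignn G m = ssignn G (odd m).
Proof. by rewrite /ssignn; case: (odd m). Qed.

Lemma ssignnD m1 m2 : ssignn G m1 ⊗ ssignn G m2 = ssignn G (m1 + m2).
Proof. by rewrite /ssignn oddD; case: (odd m1); case: (odd m2); rewrite //= /sone /= addr0. Qed.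

Lemma ssignn_neq0 m : ssignn G m <> SZero.
Proof. by rewrite /ssignn; case: (odd m). Qed.

Lemma smodg_ssignn m : smodg (ssignn G m) = 0.
Proof. by rewrite /ssignn; case: (odd m). Qed.

Lemma ssignn_negb (s : bool) a : ssignn G (~~ s) ⊗ a = ⊖ (ssignn G s ⊗ a).
Proof. by case: s; case: a. Qed.

Definition sinv a : smax G :=
  match a with
  | SZero => SZero | SPos u => SPos (- u) | SNeg u => SNeg (- u) | SBal u => SBal (- u)
  end.

Lemma sinvK a : ssigned a -> a <> SZero -> sinv a ⊗ a = sone G.
Proof. by case: a => [|u|u|u] //= _ _; rewrite addNr. Qed.

Lemma ssigned_sinv a : ssigned a -> ssigned (sinv a).
Proof. by case: a. Qed.

Lemma sinv_neq0 a : a <> SZero -> sinv a <> SZero.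
Proof. by case: a. Qed.

Lemma stimesI c a b : ssigned c -> c <> SZero -> c ⊗ a = c ⊗ b -> a = b.
Proof.
by move=> sc nc /(congr1 (stimes (sinv c))); rewrite !stimesA sinvK // !stimes1l.
Qed.

Lemma sbalanced_cancel c a : ssigned c -> c <> SZero -> sbalanced (c ⊗ a) -> sbalanced a.
Proof. by move=> sc nc /(sbalancedMr (sinv c)); rewrite stimesA sinvK // stimes1l. Qed.

Lemma sabsM a b : sabs (a ⊗ b) = sabs a ⊗ sabs b.
Proof. by case: a b => [|u|u|u] [|v|v|v]. Qed.

Lemma sabs_eq0 a : sabs a = SZero <-> a = SZero.
Proof. by case: a. Qed.

Lemma sabsN a : sabs (⊖ a) = sabs a.
Proof. by case: a. Qed.

Lemma smodg_sabs a b : sabs a = sabs b -> smodg a = smodg b.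
Proof. by case: a b => [|u|u|u] [|v|v|v] //= [->]. Qed.

Lemma sabs_smodg a b : a <> SZero -> b <> SZero -> smodg a = smodg b -> sabs a = sabs b.
Proof. by case: a b => [|u|u|u] [|v|v|v] //= _ _ ->. Qed.

(** * Comparing moduli *)

(* [mod_le a b] is |a| ⪯ |b| and [mod_lt a b] its strict version, except
   that 0 is strictly below everything, itself included.  The zero cases are
   explicit because [smodg SZero] is the junk value 0. *)
Definition mod_le a b := a = SZero \/ (b <> SZero /\ smodg a <= smodg b).
Definition mod_lt a b := a = SZero \/ (b <> SZero /\ smodg a < smodg b).

Lemma mod_le_refl a : mod_le a a.
Proof. by case: a => [|u|u|u]; [left|right..]. Qed.

Lemma mod_le_trans b a c : mod_le a b -> mod_le b c -> mod_le a c.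
Proof.
move=> [->|[nb ab]]; first by left.
by case=> [//|[nc bc]]; right; split=> //; apply: le_trans bc.
Qed.

Lemma mod_lt_le_trans b a c : mod_lt a b -> mod_le b c -> mod_lt a c.
Proof.
move=> [->|[nb ab]]; first by left.
by case=> [//|[nc bc]]; right; split=> //; apply: lt_le_trans bc.
Qed.

Lemma mod_le_lt_trans b a c : mod_le a b -> mod_lt b c -> mod_lt a c.
Proof.
move=> [->|[nb ab]]; first by left.
by case=> [//|[nc bc]]; right; split=> //; apply: le_lt_trans bc.
Qed.

Lemma mod_le0 a : mod_le a SZero -> a = SZero.
Proof. by case=> // -[]. Qed.

Lemma mod_leNl a b : mod_le (⊖ a) b <-> mod_le a b.
Proof. by rewrite /mod_le smodgN sopp_eq0. Qed.

Lemma mod_ltNl a b : mod_lt (⊖ a) b <-> mod_lt a b.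
Proof. by rewrite /mod_lt smodgN sopp_eq0. Qed.

Lemma mod_le_mul2l c a b : mod_le a b -> mod_le (c ⊗ a) (c ⊗ b).
Proof.
case=> [->|[nb ab]]; first by left; rewrite stimes0r.
case: (eq0_dec c) => [->|nc]; first by left.
case: (eq0_dec a) => [->|na]; first by left; rewrite stimes0r.
by right; split; [apply: stimes_neq0 | rewrite !smodgM // leD2l].
Qed.

Lemma mod_le_splusl a b : mod_le a (a ⊕ b).
Proof.
rewrite /mod_le; case: a b => [|u|u|u] [|v|v|v] /=; try (by left); right;
  smax_solve; (split; [done|]); try exact: ltW; exact: lexx.
Qed.

Lemma mod_le_splus a b c : mod_le a c -> mod_le b c -> mod_le (a ⊕ b) c.
Proof.
move=> [->|[nc ac]] //; move=> [->|[_ bc]]; first by rewrite splus0r; right.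
right; split=> //; case: a b ac bc => [|u|u|u] [|v|v|v] //=; smax_solve.
Qed.

Lemma mod_lt_splus a b c : mod_lt a c -> mod_lt b c -> mod_lt (a ⊕ b) c.
Proof.
move=> [->|[nc ac]] //; move=> [->|[_ bc]]; first by rewrite splus0r; right.
right; split=> //; case: a b ac bc => [|u|u|u] [|v|v|v] //=; smax_solve.
Qed.

Lemma splus_mod_lt a b : mod_lt b a -> a ⊕ b = a.
Proof.
case=> [->|[]]; first by rewrite splus0r.
by case: a b => [|u|u|u] [|v|v|v] //= _; smax_solve.
Qed.

Lemma sbalanced_splus_mod_le a b : sbalanced a -> mod_le b a -> sbalanced (a ⊕ b).
Proof.
rewrite /sbalanced => ha [->|[na h]]; first by rewrite splus0r.
by move: ha na h; case: a b => [|u|u|u] [|v|v|v] //= ha _; try discriminate; smax_solve.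
Qed.

Lemma mod_le_sabs a a' b b' :
  sabs a = sabs a' -> sabs b = sabs b' -> mod_le a b -> mod_le a' b'.
Proof.
move=> ea eb [a0|[nb ab]]; first by left; apply/sabs_eq0; rewrite -ea a0.
right; split; first by move=> b0; apply: nb; apply/sabs_eq0; rewrite eb b0.
by rewrite -(smodg_sabs ea) -(smodg_sabs eb).
Qed.

Lemma mod_le_not_lt a b :
  a <> SZero -> mod_le a b -> ~ mod_lt a b -> b <> SZero /\ smodg a = smodg b.
Proof.
move=> na [//|[nb ab]] nlt; split=> //; apply/eqP; rewrite eq_le ab /=.
by rewrite leNgtG; apply/negP => lt; apply: nlt; right.
Qed.

Lemma sbalanced_splus_dominated a r : ssigned a -> a <> SZero -> sbalanced (a ⊕ r) ->
  r <> SZero /\ smodg a <= smodg r.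
Proof.
move=> + + /sbalancedP; case: a r => [|u|u|u] [|v|v|v] //= _ _; smax_solve;
  split=> //; try exact: ltW; by rewrite lexx.
Qed.

Section BigSplus.
Variables (I : finType) (P : pred I) (f : I -> smax G).

Lemma mod_le_bigsplus i : P i -> mod_le (f i) (\ssum_(j | P j) f j).
Proof. by move=> Pi; rewrite (bigD1 i) //=; apply: mod_le_splusl. Qed.

Lemma bigsplus_mod_le y : (forall i, P i -> mod_le (f i) y) -> mod_le (\ssum_(j | P j) f j) y.
Proof.
move=> h; apply: (big_rec (fun s => mod_le s y)); first by left.
by move=> i x Pi hx; apply: mod_le_splus => //; apply: h.
Qed.

Lemma bigsplus_mod_lt y : (forall i, P i -> mod_lt (f i) y) -> mod_lt (\ssum_(j | P j) f j) y.
Proof.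
move=> h; apply: (big_rec (fun s => mod_lt s y)); first by left.
by move=> i x Pi hx; apply: mod_lt_splus => //; apply: h.
Qed.

Lemma bigsplus_attained :
  \ssum_(j | P j) f j = SZero \/
  exists i, [/\ P i, f i <> SZero & smodg (f i) = smodg (\ssum_(j | P j) f j)].
Proof.
apply: (big_rec (fun s => s = SZero \/
  exists i, [/\ P i, f i <> SZero & smodg (f i) = smodg s])); first by left.
move=> i x Pi [->|[i0 [Pi0 nz e]]].
  rewrite splus0r; case E: (f i) => [|u|u|u]; first by left.
  1-3: by right; exists i; rewrite E.
case E: (f i) => [|u|u|u]; first by right; exists i0.
all: case: x e => [|v|v|v] //= e; right; smax_solve;
  first [ by exists i0; split | by exists i; rewrite E; split ].
Qed.

Lemma bigsplus_signed_top y i : \ssum_(j | P j) f j = y -> ssigned y ->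
  P i -> f i <> SZero -> smodg (f i) = smodg y -> f i = y.
Proof.
move=> + + Pi; rewrite (bigD1 i) //=.
by case: (f i) (\ssum_(j | P j && (j != i)) f j) => [|u|u|u] [|v|v|v] //= <-; smax_solve.
Qed.

Lemma bigsplus_eq_top y : (forall i, P i -> f i = y \/ mod_lt (f i) y) ->
  (exists2 i, P i & f i = y) -> \ssum_(j | P j) f j = y.
Proof.
move=> h [i Pi fi]; rewrite (bigD1 i) //= fi.
have [->|lt] : \ssum_(j | P j && (j != i)) f j = y \/
               mod_lt (\ssum_(j | P j && (j != i)) f j) y.
- apply: (big_rec (fun s => s = y \/ mod_lt s y)); first by right; left.
  move=> j x /andP[Pj _] [->|hx]; case: (h j Pj) => [->|hj].
  + by left; rewrite splusxx.
  + by left; rewrite splusC splus_mod_lt.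
  + by left; rewrite splus_mod_lt.
  + by right; apply: mod_lt_splus.
- exact: splusxx.
- exact: splus_mod_lt.
Qed.

End BigSplus.

(** * The matrix γ I ⊖ A *)

Section ShiftedMatrix.
Variables (m : nat) (A : 'M[smax G]_m.+1) (k : 'I_m.+1).
Hypothesis tpdA : tpd A.
Hypothesis simple_k : forall i, A i i = A k k -> i = k.
Implicit Types (s p : 'S_m.+1) (i j l x : 'I_m.+1) (w : 'I_m.+1 -> smax G).

Local Notation B := (sshift (A k k) A).
Local Notation t j := (sadj B j k).
Local Notation mu i := (smodg (B i i)).

Lemma tpd_diag_pos i : exists u, A i i = SPos u.
Proof.
by case: tpdA => _ _ h _; move: (h i); rewrite /slt; case: (A i i) => //= u _; exists u.
Qed.

Lemma shift_offdiag i j : i != j -> B i j = ⊖ A i j.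
Proof. by move=> /negPf ij; rewrite mxE ij. Qed.

Lemma ssigned_shift_offdiag i j : i != j -> ssigned (B i j).
Proof. by move=> ij; rewrite shift_offdiag //; apply/ssignedN; case: tpdA. Qed.

Lemma shift_diag i : B i i = A k k ⊕ ⊖ A i i.
Proof. by rewrite mxE eqxx. Qed.

Lemma sbalanced_shift_kk : sbalanced (B k k).
Proof. by rewrite shift_diag; apply: sbalanced_subxx. Qed.

Lemma shift_diag_neq0 i : B i i <> SZero.
Proof.
rewrite shift_diag; have [u ->] := tpd_diag_pos k; have [v ->] := tpd_diag_pos i.
by rewrite /=; case: ifP => //; case: ifP.
Qed.

Lemma ssigned_shift_diag i : i != k -> ssigned (B i i).
Proof.
move=> ik; have [u hu] := tpd_diag_pos k; have [v hv] := tpd_diag_pos i.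
have uv : u != v by apply: contra_neq ik => uv; apply: simple_k; rewrite hu hv uv.
by rewrite shift_diag hu hv /= (negPf uv); case: ifP.
Qed.

Lemma tpd_diag_le_mu i u : A i i = SPos u -> u <= mu i.
Proof.
move=> hu; have [v hv] := tpd_diag_pos k; rewrite shift_diag hv hu /=.
by case: (comparable_ltgtP (comparableG v u)) => h //=; rewrite ?h // ltW.
Qed.

(* The tropical positive definiteness a_ij^2 < a_ii a_jj, transported to B. *)
Lemma shift_offdiag_dominated i j :
  i != j -> B i j <> SZero -> smodg (B i j) *+ 2 < mu i + mu j.
Proof.
move=> ij nz; have [u hu] := tpd_diag_pos i; have [v hv] := tpd_diag_pos j.
apply: (@lt_le_trans _ _ (u + v)); first last.
  by apply: leD; apply: tpd_diag_le_mu.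
case: tpdA => _ hs _ /(_ i j ij); move: (hs i j) nz.
rewrite shift_offdiag // smodgN /slt hu hv; case: (A i j) => [|w|w|w] //= _ _;
  by rewrite mulr2n; case: (comparable_ltgtP (comparableG (w + w) (u + v))).
Qed.

Lemma potential_lt u v j l : l != j -> B j l <> SZero ->
  mu j + u <= smodg (B j l) + v -> mu j + u *+ 2 < mu l + v *+ 2.
Proof.
by move=> lj nz; apply: potential_step; apply: shift_offdiag_dominated; rewrite // eq_sym.
Qed.

(** * Expanding the k-th column of the adjugate *)

Definition cofprod s := \sprod_(x | x != k) B x (s x).
Definition cofterm s := ssignn G (odd_perm s) ⊗ cofprod s.

Lemma adj_col_expand j : t j = \ssum_(s : 'S_m.+1 | s k == j) cofterm s.
Proof.
rewrite [RHS](reindex _ (lift_perm_onto k j)) /sadj mxE /sdet big_distrr /=.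
apply: eq_big => [s | s _]; first by rewrite lift_perm_id eqxx.
rewrite /cofterm stimesA ssignnD ssignn_odd [in RHS]ssignn_odd odd_lift_perm oddD.
congr (_ ⊗ _); first by rewrite oddb oddD (addbC (odd j)) oddb.
by rewrite /cofprod sprod_lift; apply: eq_bigr => x _; rewrite !mxE lift_perm_lift.
Qed.

Definition cofweight s := \sum_(x | x != k) smodg (B x (s x)).

Lemma cofprod_entry_neq0 s x : cofprod s <> SZero -> x != k -> B x (s x) <> SZero.
Proof. by move=> nz xk hx; apply: nz; rewrite /cofprod (bigD1 x) //= hx stimes0l. Qed.

Lemma cofterm_neq0 s : cofprod s <> SZero -> cofterm s <> SZero.
Proof. by move=> h; apply: stimes_neq0 => //; apply: ssignn_neq0. Qed.

Lemma smodg_cofterm s : cofprod s <> SZero -> smodg (cofterm s) = cofweight s.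
Proof.
move=> nz; rewrite /cofterm smodgM // ?smodg_ssignn ?add0r; last exact: ssignn_neq0.
by rewrite smodg_sprod // => x; apply: cofprod_entry_neq0.
Qed.


(** * Weights of permutations *)

Lemma porbit_perm_in s x : (s x \in porbit s k) = (x \in porbit s k).
Proof.
by rewrite porbit_sym [in RHS]porbit_sym; have := porbit_perm s 1 x; rewrite expg1 => ->.
Qed.

Definition orbit_restr_fun (b : bool) s x := if (x \in porbit s k) == b then s x else x.

Lemma orbit_restr_fun_inj (b : bool) s : injective (orbit_restr_fun b s).
Proof.
move=> x y; rewrite /orbit_restr_fun.
case: ifP => hx; case: ifP => hy //.
- exact: perm_inj.
- by move=> e; move: hx; rewrite -porbit_perm_in e hy.
- by move=> e; move: hy; rewrite -porbit_perm_in -e hx.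
Qed.

Definition orbit_restr (b : bool) s := perm (@orbit_restr_fun_inj b s).

Lemma orbit_restrE (b : bool) s x :
  orbit_restr b s x = if (x \in porbit s k) == b then s x else x.
Proof. by rewrite permE. Qed.

Lemma orbit_restr_entry_neq0 (b : bool) s x : B x (s x) <> SZero -> B x (orbit_restr b s x) <> SZero.
Proof. by rewrite orbit_restrE; case: ifP => // _ _; apply: shift_diag_neq0. Qed.

(* Composing with tperm k j splits the cycle through k and j in two. *)
Lemma notin_porbit_tperm p j :
  j != k -> j \in porbit p k -> j \notin porbit (tperm k j * p) k.
Proof.
move=> jk hj.
have h1 := porbits_mul_tperm p k j.
have h2 := porbits_mul_tperm (tperm k j * p) k j.
rewrite /= mulgA tperm2 mul1g in h2; rewrite /= in h1.
rewrite porbit_sym in hj; rewrite hj eq_sym jk /= in h1.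
rewrite eq_sym jk porbit_sym in h2.
apply/negP => hin; rewrite hin /= in h2.
by move: h1 h2; set a := #|_|; set b := #|_|; lia.
Qed.

(* Sum the dominance inequality of [shift_offdiag_dominated] over the pairs
   (x, s x), using that s permutes D. *)
Lemma cycles_weight_le s (D : pred 'I_m.+1) :
  (forall x, D (s x) = D x) -> (forall x, D x -> B x (s x) <> SZero) ->
  \sum_(x | D x) smodg (B x (s x)) <= \sum_(x | D x) mu x /\
  ((exists2 x, D x & s x != x) ->
   \sum_(x | D x) smodg (B x (s x)) < \sum_(x | D x) mu x).
Proof.
move=> Ds nz.
have reindex_mu : \sum_(x | D x) mu (s x) = \sum_(x | D x) mu x.
  rewrite [RHS](reindex_inj (@perm_inj _ s)) /=.
  by apply: eq_bigl => x; rewrite Ds.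
have term x : D x -> smodg (B x (s x)) *+ 2 <= mu x + mu (s x).
  move=> Dx; case: (eqVneq (s x) x) => [->|sx]; first by rewrite mulr2n.
  by apply/ltW/shift_offdiag_dominated; [rewrite eq_sym | apply: nz].
have E1 : (\sum_(x | D x) smodg (B x (s x))) *+ 2 =
          \sum_(x | D x) smodg (B x (s x)) *+ 2 by rewrite sumrMnl.
have E2 : (\sum_(x | D x) mu x) *+ 2 = \sum_(x | D x) (mu x + mu (s x)).
  by rewrite big_split /= reindex_mu mulr2n.
split; first by apply: le_of_double; rewrite E1 E2; apply: le_sum.
move=> [x Dx sx]; apply: lt_of_double; rewrite E1 E2.
apply: lt_sum => //; exists x => //.
by apply: shift_offdiag_dominated; [rewrite eq_sym | apply: nz].
Qed.

Lemma cofweight_orbit_restr s : cofprod s <> SZero ->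
  cofweight s <= cofweight (orbit_restr true s) /\
  ((exists2 x, x \notin porbit s k & s x != x) ->
   cofweight s < cofweight (orbit_restr true s)).
Proof.
move=> nz; have kO : k \in porbit s k by apply: porbit_id.
have split_sum (f : 'I_m.+1 -> G) : \sum_(x | x != k) f x =
    \sum_(x | (x != k) && (x \in porbit s k)) f x + \sum_(x | x \notin porbit s k) f x.
  rewrite (bigID (fun x => x \in porbit s k)) /=; congr (_ + _).
  by apply: eq_bigl => x; case: (eqVneq x k) => [->|]; rewrite ?kO.
have -> : cofweight (orbit_restr true s) =
    \sum_(x | (x != k) && (x \in porbit s k)) smodg (B x (s x)) +
    \sum_(x | x \notin porbit s k) mu x.
  rewrite /cofweight split_sum; congr (_ + _); apply: eq_bigr => x hx.
    by move/andP: hx => [_ hx]; rewrite orbit_restrE hx.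
  by rewrite orbit_restrE (negPf hx).
have Ds x : (s x \notin porbit s k) = (x \notin porbit s k) by rewrite porbit_perm_in.
have nzD x : x \notin porbit s k -> B x (s x) <> SZero.
  by move=> xO; apply: cofprod_entry_neq0 => //; apply: contraNneq xO => ->.
have [le lt] := cycles_weight_le Ds nzD.
by rewrite /cofweight split_sum leD2l ltD2l.
Qed.

Lemma cofweight_split j s : j != k ->
  cofweight s = smodg (B j (s j)) + \sum_(x | (x != k) && (x != j)) smodg (B x (s x)).
Proof. by move=> jk; rewrite /cofweight (bigD1 j). Qed.

Lemma cofprod_neq0 s : (forall x, x != k -> B x (s x) <> SZero) -> cofprod s <> SZero.
Proof. exact: sprod_neq0. Qed.

Lemma exchange_off_orbit j r : j != k -> j \notin porbit r k -> r j != j ->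
  cofprod r <> SZero -> B j (r k) <> SZero ->
  exists p, [/\ p k = j, cofprod p <> SZero &
             smodg (B j (r k)) + cofweight r < mu j + cofweight p].
Proof.
move=> jk jr rj nzr nzj; pose q := orbit_restr true r; pose p := (tperm k j * q)%g.
have qj : q j = j by rewrite orbit_restrE (negPf jr).
have pk : p k = j by rewrite permM tpermL.
have pj : p j = r k by rewrite permM tpermR orbit_restrE porbit_id.
have pq x : x != k -> x != j -> p x = q x.
  by move=> xk xj; rewrite permM tpermD // eq_sym.
exists p; split=> //.
  apply: cofprod_neq0 => x xk; case: (eqVneq x j) => [->|xj]; first by rewrite pj.
  by rewrite pq //; apply: orbit_restr_entry_neq0; apply: cofprod_entry_neq0.
have [_ /(_ (ex_intro2 _ _ j jr rj))] := cofweight_orbit_restr nzr.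
rewrite (cofweight_split q jk) (cofweight_split p jk) qj pj.
have -> : \sum_(x | (x != k) && (x != j)) smodg (B x (p x)) =
          \sum_(x | (x != k) && (x != j)) smodg (B x (q x)).
  by apply: eq_bigr => x /andP[xk xj]; rewrite pq.
by move=> lt; rewrite addrCA ltD2l.
Qed.

Lemma cofweight_tperm j s : j != k ->
  smodg (B j (s j)) + cofweight (tperm k j * s) = smodg (B j (s k)) + cofweight s.
Proof.
move=> jk; rewrite !(cofweight_split _ jk) permM tpermR addrCA; congr (_ + (_ + _)).
by apply: eq_bigr => x /andP[xk xj]; rewrite permM tpermD // eq_sym.
Qed.

(* If j lies on the cycle of s through k, split it off with tperm k j first;
   then keep only the cycle through k and reroute k to j. *)
Lemma cofweight_exchange j l s : j != k -> l != j -> s k = l -> s j != j ->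
  B j l <> SZero -> cofprod s <> SZero ->
  exists p, [/\ p k = j, cofprod p <> SZero &
             smodg (B j l) + cofweight s < mu j + cofweight p].
Proof.
move=> jk lj skl sjj nzl nzs; case: (boolP (j \in porbit s k)) => hj; last first.
  by rewrite -skl; apply: exchange_off_orbit; rewrite ?skl.
pose r := (tperm k j * s)%g.
have rj : r j = l by rewrite permM tpermR.
have nzr : cofprod r <> SZero.
  apply: cofprod_neq0 => x xk; case: (eqVneq x j) => [->|xj]; first by rewrite rj.
  by rewrite permM tpermD 1?eq_sym //; apply: cofprod_entry_neq0.
have rk : r k = s j by rewrite permM tpermL.
have := exchange_off_orbit jk (notin_porbit_tperm jk hj); rewrite rj rk.
case/(_ lj nzr (cofprod_entry_neq0 nzs jk)) => p [pk nzp lt].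
by exists p; split; rewrite // -skl -cofweight_tperm.
Qed.

Lemma ssigned_cofprod1 : ssigned (cofprod 1).
Proof. by apply: ssigned_sprod => x xk; rewrite perm1; apply: ssigned_shift_diag. Qed.

Lemma cofprod1_neq0 : cofprod 1 <> SZero.
Proof. by apply: cofprod_neq0 => x _; rewrite perm1; apply: shift_diag_neq0. Qed.

(* Only the identity permutation attains the maximal weight. *)
Lemma adj_col_kk : t k = cofprod 1.
Proof.
have cofterm1 : cofterm 1 = cofprod 1 by rewrite /cofterm odd_perm1 stimes1l.
have nz1 := cofprod1_neq0.
rewrite adj_col_expand -cofterm1; apply: bigsplus_eq_top; last by exists 1%g; rewrite ?perm1.
move=> s /eqP skk; case: (eqVneq s 1%g) => [->|s1]; [by left | right].
case: (eq0_dec (cofprod s)) => [nz0|nz]; first by left; rewrite /cofterm nz0 stimes0r.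
right; split; first exact: cofterm_neq0.
rewrite !smodg_cofterm //.
have Ds x : (s x != k) = (x != k) by rewrite -{1}skk (inj_eq perm_inj).
have [_ lt] := cycles_weight_le Ds (fun x => cofprod_entry_neq0 (x := x) nz).
have -> : cofweight 1 = \sum_(x | x != k) mu x by apply: eq_bigr => x _; rewrite perm1.
apply: lt; have [x sx] : exists x, s x != x.
  apply/existsP; apply: contraNT s1 => /existsPn hx.
  by apply/eqP/permP => x; rewrite perm1; apply/eqP; move: (hx x); rewrite negbK.
by exists x => //; apply: contraNneq sx => ->; rewrite skk.
Qed.

Lemma ssigned_adj_col_kk : ssigned (t k).
Proof. by rewrite adj_col_kk; apply: ssigned_cofprod1. Qed.

Lemma adj_col_kk_neq0 : t k <> SZero.
Proof. by rewrite adj_col_kk; apply: cofprod1_neq0. Qed.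

Lemma fullweight_orbit_restr s : (forall x, x \in porbit s k -> B x (s x) <> SZero) ->
  \sum_x smodg (B x (s x)) <= \sum_x smodg (B x (orbit_restr false s x)).
Proof.
move=> nz; have split_sum (f : 'I_m.+1 -> G) : \sum_x f x =
    \sum_(x | x \in porbit s k) f x + \sum_(x | x \notin porbit s k) f x.
  by rewrite (bigID (fun x => x \in porbit s k)).
rewrite !split_sum.
have -> : \sum_(x | x \notin porbit s k) smodg (B x (orbit_restr false s x)) =
          \sum_(x | x \notin porbit s k) smodg (B x (s x)).
  by apply: eq_bigr => x hx; rewrite orbit_restrE (negPf hx).
have -> : \sum_(x | x \in porbit s k) smodg (B x (orbit_restr false s x)) =
          \sum_(x | x \in porbit s k) mu x.
  by apply: eq_bigr => x hx; rewrite orbit_restrE hx.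
by rewrite leD2r; have [] := cycles_weight_le (porbit_perm_in s) nz.
Qed.

Lemma row_k_dominated l : l != k -> mod_le (B k l ⊗ t l) (B k k ⊗ t k).
Proof.
move=> lk; rewrite adj_col_expand big_distrr /=; apply: bigsplus_mod_le => s /eqP skl.
case: (eq0_dec (B k l)) => [->|nzl]; first by left.
case: (eq0_dec (cofprod s)) => [h|nzs]; first by left; rewrite /cofterm h !stimes0r.
pose p := orbit_restr false s.
have pk : p k = k by rewrite orbit_restrE porbit_id.
have nzp : cofprod p <> SZero.
  apply: cofprod_neq0 => x xk; rewrite orbit_restrE.
  by case: ifP => _; [apply: cofprod_entry_neq0 | apply: shift_diag_neq0].
apply: (@mod_le_trans (B k k ⊗ cofterm p)); last first.
  by apply: mod_le_mul2l; rewrite adj_col_expand; apply: mod_le_bigsplus; rewrite pk.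
have nzk := @shift_diag_neq0 k.
right; split; first by apply: stimes_neq0 => //; apply: cofterm_neq0.
rewrite (smodgM nzl (cofterm_neq0 nzs)) (smodgM nzk (cofterm_neq0 nzp)) !smodg_cofterm //.
have := @fullweight_orbit_restr s; rewrite -/p.
rewrite [X in X <= _](bigD1 k) // [X in _ <= X](bigD1 k) //= pk skl; apply.
move=> x _; case: (eqVneq x k) => [->|xk]; first by rewrite skl.
exact: cofprod_entry_neq0.
Qed.

Definition cofprod_off j s := \sprod_(x | (x != k) && (x != j)) B x (s x).
Definition adj_fix j l :=
  \ssum_(s : 'S_m.+1 | (s k == l) && (s j == j)) ssignn G (odd_perm s) ⊗ cofprod_off j s.
Definition adj_move j l := \ssum_(s : 'S_m.+1 | (s k == l) && (s j != j)) cofterm s.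

Lemma cofprod_split j s : j != k -> cofprod s = B j (s j) ⊗ cofprod_off j s.
Proof. by move=> jk; rewrite /cofprod (bigD1 j). Qed.

Lemma adj_col_split j l : j != k -> t l = B j j ⊗ adj_fix j l ⊕ adj_move j l.
Proof.
move=> jk; rewrite adj_col_expand (bigID (fun s : 'S_m.+1 => s j == j)) /=.
congr (_ ⊕ _); rewrite /adj_fix big_distrr /=.
apply: eq_bigr => s /andP[_ /eqP sjj].
by rewrite /cofterm (cofprod_split _ jk) sjj !stimesA (stimesC (ssignn _ _)).
Qed.

(* Composing with tperm k j matches the permutations sending k to j with
   those fixing j. *)
Lemma adj_col_fix_expand j : j != k -> t j = \ssum_(l | l != j) ⊖ (B j l ⊗ adj_fix j l).
Proof.
move=> jk; have kj : k != j by rewrite eq_sym.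
rewrite adj_col_expand (partition_big (fun s : 'S_m.+1 => s j) (fun l => l != j)) /=;
  last first.
  move=> s /eqP skj; apply: contra_neq kj => sjj.
  by apply: (@perm_inj _ s); rewrite skj sjj.
apply: eq_bigr => l lj.
rewrite (reindex_inj (mulgI (tperm k j))) /= /adj_fix big_distrr /= sopp_big.
apply: eq_big => [s | s /andP[skl sjj]]; first by rewrite !permM tpermL tpermR andbC.
rewrite /cofterm !permM tpermL tpermR in skl sjj *.
rewrite odd_mul_tperm kj /= ssignn_negb; congr sopp.
rewrite (cofprod_split _ jk) permM tpermR (eqP sjj).
have -> : cofprod_off j (tperm k j * s) = cofprod_off j s.
  by apply: eq_bigr => x /andP[xk xj]; rewrite permM tpermD // eq_sym.
by rewrite !stimesA (stimesC (ssignn _ _)).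
Qed.

Lemma adj_move_small j l : j != k -> l != j ->
  mod_lt (B j l ⊗ adj_move j l) (B j j ⊗ t j).
Proof.
move=> jk lj; rewrite /adj_move big_distrr /=.
apply: bigsplus_mod_lt => s /andP[/eqP skl sjj].
case: (eq0_dec (B j l)) => [->|nzl]; first by left.
case: (eq0_dec (cofprod s)) => [h|nzs]; first by left; rewrite /cofterm h !stimes0r.
have [p [pk nzp lt]] := cofweight_exchange jk lj skl sjj nzl nzs.
have nzj := @shift_diag_neq0 j.
apply: (@mod_lt_le_trans (B j j ⊗ cofterm p)).
  right; split; first by apply: stimes_neq0 => //; apply: cofterm_neq0.
  by rewrite (smodgM nzl (cofterm_neq0 nzs)) (smodgM nzj (cofterm_neq0 nzp)) !smodg_cofterm.
by apply: mod_le_mul2l; rewrite adj_col_expand; apply: mod_le_bigsplus; rewrite pk.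
Qed.

(* Row j of B ⊗ t, for j ≠ k, holds with equality and not only up to balance:
   the terms coming from permutations moving j are negligible. *)
Lemma row_expansion j : j != k ->
  \ssum_(l | l != j) ⊖ (B j l ⊗ t l) = B j j ⊗ t j.
Proof.
move=> jk.
have -> : \ssum_(l | l != j) ⊖ (B j l ⊗ t l) =
    \ssum_(l | l != j) ⊖ (B j j ⊗ (B j l ⊗ adj_fix j l)) ⊕
    \ssum_(l | l != j) ⊖ (B j l ⊗ adj_move j l).
  rewrite -big_split /=; apply: eq_bigr => l lj.
  rewrite (adj_col_split l jk) stimesDr soppD; congr (_ ⊕ _).
  by rewrite !stimesA (stimesC (B j l)).
have -> : \ssum_(l | l != j) ⊖ (B j j ⊗ (B j l ⊗ adj_fix j l)) = B j j ⊗ t j.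
  by rewrite (adj_col_fix_expand jk) big_distrr /=; apply: eq_bigr => l _; rewrite soppMr.
apply: splus_mod_lt; apply: bigsplus_mod_lt => l lj.
by apply/mod_ltNl; apply: adj_move_small.
Qed.

Lemma smulv_shift w i :
  smulv B w i = A k k ⊗ w i ⊕ ⊖ smulv A w i.
Proof.
have -> : smulv B w i = \ssum_j ((if i == j then A k k else SZero) ⊗ w j ⊕ ⊖ (A i j ⊗ w j)).
  by apply: eq_bigr => j _; rewrite mxE stimesDl soppMl.
rewrite big_split /= sopp_big; congr (_ ⊕ _).
by rewrite (bigD1 i) //= eqxx big1 ?splus0r // => j /negPf; rewrite eq_sym => ->.
Qed.

Lemma nabla_shiftE w i :
  snabla (smulv A w i) (A k k ⊗ w i) <-> sbalanced (smulv B w i).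
Proof. by rewrite smulv_shift /snabla -sbalancedN soppD soppK splusC. Qed.

Lemma smulv_row w j :
  smulv B w j = B j j ⊗ w j ⊕ \ssum_(l | l != j) B j l ⊗ w l.
Proof. by rewrite /smulv (bigD1 j). Qed.

Lemma adj_col_balanced i : sbalanced (smulv B (fun j => t j) i).
Proof.
rewrite smulv_row; case: (eqVneq i k) => [->|ik].
  apply: sbalanced_splus_mod_le; first exact/sbalancedMl/sbalanced_shift_kk.
  by apply: bigsplus_mod_le => l; apply: row_k_dominated.
have -> : \ssum_(l | l != i) B i l ⊗ t l = ⊖ (B i i ⊗ t i).
  by rewrite -row_expansion // sopp_big; apply: eq_bigr => l _; rewrite soppK.
exact: sbalanced_subxx.
Qed.

(** * Vectors satisfying the row identities of t *)

Definition row_identity w :=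
  forall j, j != k -> \ssum_(l | l != j) ⊖ (B j l ⊗ w l) = B j j ⊗ w j.

Lemma row_identity_adj : row_identity (fun j => t j).
Proof. exact: row_expansion. Qed.

Lemma row_identityZ c w : row_identity w -> row_identity (fun j => c ⊗ w j).
Proof.
move=> hw j jk; rewrite stimesA (stimesC _ c) -stimesA -hw // big_distrr /=.
by apply: eq_bigr => l _; rewrite soppMr !stimesA (stimesC c).
Qed.

Definition tight w j l :=
  [/\ l != j, B j l ⊗ w l <> SZero, w j <> SZero &
      smodg (B j l ⊗ w l) = smodg (B j j ⊗ w j)].

Lemma tight_potential w j l : tight w j l ->
  mu j + smodg (w j) *+ 2 < mu l + smodg (w l) *+ 2.
Proof.
case=> lj /stimes_eq0 nz wj e.
have [nzl wl] : B j l <> SZero /\ w l <> SZero by split=> h; apply: nz; auto.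
apply: potential_lt => //.
by move: e; rewrite !smodgM // => [->|]; [apply: lexx | apply: shift_diag_neq0].
Qed.

Section RowIdentity.
Variables (w : 'I_m.+1 -> smax G) (j : 'I_m.+1).
Hypotheses (hw : row_identity w) (jk : j != k).

Lemma row_identity_dominated l : l != j -> mod_le (B j l ⊗ w l) (B j j ⊗ w j).
Proof.
by move=> lj; rewrite -hw //; apply/mod_leNl; apply: (mod_le_bigsplus (fun l => ⊖ _)).
Qed.

Lemma row_identity_not_tight l : l != j -> w j <> SZero -> ~ tight w j l ->
  mod_lt (B j l ⊗ w l) (B j j ⊗ w j).
Proof.
move=> lj wj ntl; case: (eq0_dec (B j l ⊗ w l)) => [->|nz]; first by left.
apply: NNPP => nlt; apply: ntl; split=> //.
by case: (mod_le_not_lt nz (row_identity_dominated lj) nlt).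
Qed.

Lemma row_identity_tight_exists : w j <> SZero -> exists l, tight w j l.
Proof.
move=> wj; have nzj := @shift_diag_neq0 j.
case: (bigsplus_attained (fun l => l != j) (fun l => ⊖ (B j l ⊗ w l))).
  by rewrite hw // => /stimes_eq0 [].
by rewrite hw // => -[l [lj /sopp_eq0 nz e]]; exists l; split; rewrite -?e ?smodgN.
Qed.

Lemma row_identity_tight_eq l : ssigned (w j) -> tight w j l ->
  ⊖ (B j l ⊗ w l) = B j j ⊗ w j.
Proof.
move=> sj [lj nz _ e].
apply: (bigsplus_signed_top (hw jk)) => //; rewrite ?smodgN //; last by move/sopp_eq0.
exact/ssignedM/sj/ssigned_shift_diag.
Qed.

End RowIdentity.

(** * Uniqueness of the eigenvector up to a signed scalar *)

Section Uniqueness.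
Variable v : 'I_m.+1 -> smax G.
Hypothesis v_signed : forall i, ssigned (v i).
Hypothesis v_neq0 : exists i, v i <> SZero.
Hypothesis v_balanced : forall i, sbalanced (smulv B v i).

Lemma eigvec_row_step j : j != k -> v j <> SZero ->
  exists l, [/\ l != j, B j l <> SZero, v l <> SZero &
                mu j + smodg (v j) <= smodg (B j l) + smodg (v l)].
Proof.
move=> jk vj; have := v_balanced j; rewrite smulv_row => hb.
have nzj := @shift_diag_neq0 j.
have [nR le] := sbalanced_splus_dominated
  (ssignedM (ssigned_shift_diag jk) (v_signed j)) (stimes_neq0 nzj vj) hb.
case: (bigsplus_attained (fun l => l != j) (fun l => B j l ⊗ v l)) => [//|[l [lj nt e]]].
have [nzl vl] : B j l <> SZero /\ v l <> SZero.
  by split=> h; apply: nt; rewrite h ?stimes0r ?stimes0l.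
by exists l; split; rewrite // -!smodgM // e.
Qed.

Lemma eigvec_k_neq0 : v k <> SZero.
Proof.
move=> vk0; have [i] := v_neq0; apply: (no_ascending_chain
  (P := fun j => v j <> SZero) (h := fun j => mu j + smodg (v j) *+ 2)) => j vj.
have jk : j != k by apply/eqP => ejk; apply: vj; rewrite ejk.
have [l [lj nzl vl le]] := eigvec_row_step jk vj.
by exists l => //; apply: potential_lt.
Qed.

Definition lambda := v k ⊗ sinv (t k).

Local Notation tau i := (lambda ⊗ t i).

Lemma ssigned_lambda : ssigned lambda.
Proof. exact/ssignedM/ssigned_sinv/ssigned_adj_col_kk. Qed.

Lemma lambda_neq0 : lambda <> SZero.
Proof. exact/stimes_neq0/sinv_neq0/adj_col_kk_neq0/eigvec_k_neq0. Qed.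

Lemma tau_k : tau k = v k.
Proof. by rewrite -stimesA sinvK ?stimes1r //; [apply: ssigned_adj_col_kk | apply: adj_col_kk_neq0]. Qed.

Lemma row_identity_tau : row_identity (fun i => tau i).
Proof. exact/row_identityZ/row_identity_adj. Qed.

Lemma eigvec_support j : tau j = SZero -> v j = SZero.
Proof.
move=> tj; case: (eq0_dec (v j)) => // vj; exfalso.
apply: (no_ascending_chain (P := fun j => v j <> SZero /\ tau j = SZero)
  (h := fun j => mu j + smodg (v j) *+ 2) _ (conj vj tj)) => {tj vj}j [vj tj].
have jk : j != k by apply/eqP => ejk; subst j; apply: vj; rewrite -tau_k.
have [l [lj nzl vl le]] := eigvec_row_step jk vj.
exists l; last exact: potential_lt.
split=> //; have := row_identity_dominated row_identity_tau jk lj.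
by rewrite tj stimes0r => /mod_le0 /stimes_eq0 [].
Qed.

Lemma eigvec_mod_le j : mod_le (v j) (tau j).
Proof.
case: (eq0_dec (v j)) => [->|vj]; first by left.
have tj : tau j <> SZero by move/eigvec_support.
right; split=> //; rewrite leNgtG; apply/negP => lt.
apply: (no_ascending_chain (P := fun j => v j <> SZero /\ smodg (tau j) < smodg (v j))
  (h := fun j => mu j + smodg (v j) *+ 2) _ (conj vj lt)) => {tj vj lt}j [vj lt].
have jk : j != k by apply/eqP => ejk; move: lt; rewrite ejk tau_k ltxx.
have [l [lj nzl vl le]] := eigvec_row_step jk vj.
exists l; last exact: potential_lt.
split=> //; have tl : tau l <> SZero by move/eigvec_support.
have tj : tau j <> SZero by move/eigvec_support.
case: (row_identity_dominated row_identity_tau jk lj) => [/stimes_eq0[] //|[_]].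
rewrite (smodgM nzl tl) (smodgM (@shift_diag_neq0 j) tj) => le'.
exact: lt_transfer le le' lt.
Qed.

(* The non-tight terms of row j are negligible, so row j of B ⊗ v reads
   B j j ⊗ v j ⊕ ⊖ (B j j ⊗ tau j). *)
Lemma eigvec_row_determined j : j != k -> ssigned (tau j) -> tau j <> SZero ->
  (forall l, tight (fun i => tau i) j l -> v l = tau l) -> v j = tau j.
Proof.
move=> jk sj tj tight_eq; have tau_rows := row_identity_tau.
have row_v : \ssum_(l | l != j) ⊖ (B j l ⊗ v l) = B j j ⊗ tau j.
  apply: bigsplus_eq_top; last first.
    have [l tl] := row_identity_tight_exists tau_rows jk tj.
    by exists l; [case: tl | rewrite tight_eq // (row_identity_tight_eq tau_rows)].
  move=> l lj; case: (classic (tight (fun i => tau i) j l)) => tl.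
    by left; rewrite tight_eq // (row_identity_tight_eq tau_rows).
  right; apply/mod_ltNl; apply: (@mod_le_lt_trans (B j l ⊗ tau l)).
    exact/mod_le_mul2l/eigvec_mod_le.
  exact: (row_identity_not_tight tau_rows jk).
have := v_balanced j; rewrite smulv_row.
have -> : \ssum_(l | l != j) B j l ⊗ v l = ⊖ (B j j ⊗ tau j).
  by rewrite -row_v sopp_big; apply: eq_bigr => l _; rewrite soppK.
rewrite -soppMr -stimesDr => /sbalanced_cancel.
move=> /(_ (ssigned_shift_diag jk) (@shift_diag_neq0 j)).
exact: ssigned_nabla_eq.
Qed.

Lemma eigvec_signed_eq j : ssigned (tau j) -> v j = tau j.
Proof.
move=> sj; apply: NNPP => nj.
apply: (no_ascending_chain (P := fun j => ssigned (tau j) /\ v j <> tau j)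
  (h := fun j => mu j + smodg (tau j) *+ 2) _ (conj sj nj)) => {sj nj}j [sj nj].
have jk : j != k by apply/eqP => ejk; apply: nj; rewrite ejk tau_k.
have tj : tau j <> SZero by move=> tj; apply: nj; rewrite tj eigvec_support.
case: (classic (exists l, tight (fun i => tau i) j l /\ v l <> tau l)).
  move=> [l [tl vl]]; exists l; last exact: tight_potential tl.
  split=> //; have [_ /stimes_eq0 nz _ _] := tl.
  have e := row_identity_tight_eq row_identity_tau jk sj tl.
  apply: (@ssignedMr (B j l)); first by move=> h; apply: nz; left.
  by apply/ssignedN; rewrite e; apply/ssignedM/sj/ssigned_shift_diag.
move=> none; case: nj; apply: eigvec_row_determined => // l tl.
by apply: NNPP => vl; apply: none; exists l.
Qed.

Lemma eigvec_nabla_adj i : snabla (v i) (lambda ⊗ t i).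
Proof.
case: (boolP (isbal (tau i))) => [/sbalancedP bal|nb].
  rewrite /snabla splusC; apply: sbalanced_splus_mod_le; first exact/sbalancedN.
  by apply: (mod_le_sabs _ _ (eigvec_mod_le i)); rewrite ?sabsN.
by rewrite -eigvec_signed_eq; [apply: sbalanced_subxx | move: nb; case: (tau i)].
Qed.

End Uniqueness.

(** * A signed eigenvector with the moduli of t *)

Definition coef j l := ⊖ (sinv (B j j) ⊗ B j l).

Lemma coef_mul j l a : j != k -> B j j ⊗ (coef j l ⊗ a) = ⊖ (B j l ⊗ a).
Proof.
move=> jk; rewrite /coef soppMl soppMr !stimesA (stimesC (B j j)).
by rewrite sinvK ?stimes1l //; [apply: ssigned_shift_diag | apply: shift_diag_neq0].
Qed.

Lemma ssigned_coef j l : j != k -> l != j -> ssigned (coef j l).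
Proof.
move=> jk lj; apply/ssignedN/ssignedM; first exact/ssigned_sinv/ssigned_shift_diag.
by apply: ssigned_shift_offdiag; rewrite eq_sym.
Qed.

Section SignedEigenvector.
Variable succ : 'I_m.+1 -> 'I_m.+1.
Hypothesis succ_tight :
  forall j, j != k -> t j <> SZero -> tight (fun i => t i) j (succ j).

Definition depth j := #|above (fun i => mu i + smodg (t i) *+ 2) j|.

Lemma depth_succ j : j != k -> t j <> SZero -> (depth (succ j) < depth j)%N.
Proof. by move=> jk tj; apply: card_above_lt; exact: tight_potential (succ_tight jk tj). Qed.

Lemma depth_ltn j : (depth j < m.+1)%N.
Proof. by rewrite -[m.+1]card_ord; apply: card_above_ltn. Qed.

(* Follow the tight successors from j, which reach k or a zero of t after at
   most m steps, and propagate the sign back along the path. *)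
Fixpoint signed_adj_iter (N : nat) j : smax G :=
  if N is N'.+1 then
    if j == k then t j else
    if eq0_dec (t j) then t j else coef j (succ j) ⊗ signed_adj_iter N' (succ j)
  else t j.

Lemma signed_adj_iter_stable N N' j : (depth j < N)%N -> (depth j < N')%N ->
  signed_adj_iter N j = signed_adj_iter N' j.
Proof.
elim: N N' j => [//|N IH] [//|N'] j dN dN' /=.
case: eqP => // /eqP jk; case: eq0_dec => // tj; have lt := depth_succ jk tj.
by rewrite (IH N') //; [apply: leq_trans lt dN | apply: leq_trans lt dN'].
Qed.

Lemma signed_adj_iter_spec N j : (depth j < N)%N ->
  [/\ ssigned (signed_adj_iter N j), sabs (signed_adj_iter N j) = sabs (t j) &
      (ssigned (t j) -> signed_adj_iter N j = t j)].
Proof.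
elim: N j => [//|N IH] j /= dj.
case: eqP => [->|/eqP jk]; first by split=> //; apply: ssigned_adj_col_kk.
case: eq0_dec => [tj0|tj] /=; first by rewrite tj0; split.
set l := succ j; have [lj nzl _ e] := succ_tight jk tj.
have [s1 a1 e1] := IH l (leq_trans (depth_succ jk tj) dj).
have [nl tl] : B j l <> SZero /\ t l <> SZero by split=> h; apply: nzl; rewrite h ?stimes0r.
have nzc : coef j l ⊗ t l <> SZero.
  move=> /(congr1 (stimes (B j j))); rewrite coef_mul // stimes0r.
  by move/sopp_eq0.
have nzj := @shift_diag_neq0 j; have sj := ssigned_shift_diag jk.
split.
- exact/ssignedM/s1/ssigned_coef.
- rewrite sabsM a1 -sabsM; apply: sabs_smodg => //.
  have : smodg (B j j ⊗ (coef j l ⊗ t l)) = smodg (B j j ⊗ t j).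
    by rewrite coef_mul // smodgN e.
  by rewrite (smodgM nzj nzc) (smodgM nzj tj) => /eqP; rewrite eqD2l => /eqP.
- move=> stj; have e' := row_identity_tight_eq row_identity_adj jk stj (succ_tight jk tj).
  have stl : ssigned (t l).
    by apply: (ssignedMr nl); apply/ssignedN; rewrite e'; apply: ssignedM.
  by apply: (stimesI sj nzj); rewrite e1 // coef_mul.
Qed.

Definition signed_adj j := signed_adj_iter m.+1 j.

Lemma ssigned_signed_adj j : ssigned (signed_adj j).
Proof. by case: (signed_adj_iter_spec (depth_ltn j)). Qed.

Lemma sabs_signed_adj j : sabs (signed_adj j) = sabs (t j).
Proof. by case: (signed_adj_iter_spec (depth_ltn j)). Qed.

Lemma signed_adj_id j : ssigned (t j) -> signed_adj j = t j.
Proof. by case: (signed_adj_iter_spec (depth_ltn j)). Qed.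

Lemma signed_adj_succ j : j != k -> t j <> SZero ->
  signed_adj j = coef j (succ j) ⊗ signed_adj (succ j).
Proof.
move=> jk tj; rewrite {1}/signed_adj /= (negPf jk).
case: eq0_dec => [tj0|_] /=; first by case: tj.
congr (_ ⊗ _); apply: signed_adj_iter_stable; last exact: depth_ltn.
exact: leq_trans (depth_succ jk tj) (depth_ltn j).
Qed.

Lemma sabs_signed_adjM a j : sabs (a ⊗ signed_adj j) = sabs (a ⊗ t j).
Proof. by rewrite !sabsM sabs_signed_adj. Qed.

Lemma signed_adj_balanced j : sbalanced (smulv B signed_adj j).
Proof.
rewrite smulv_row; case: (eqVneq j k) => [->|jk].
  apply: sbalanced_splus_mod_le; first exact/sbalancedMl/sbalanced_shift_kk.
  apply: bigsplus_mod_le => l lk; rewrite [signed_adj k]signed_adj_id; last exact: ssigned_adj_col_kk.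
  by apply: (mod_le_sabs _ _ (row_k_dominated lk)) => //; rewrite sabs_signed_adjM.
case: (eq0_dec (t j)) => [tj|tj].
  have /sabs_eq0 -> : sabs (signed_adj j) = SZero by rewrite sabs_signed_adj tj.
  rewrite stimes0r splus0l; apply: sbalanced_big => l lj.
  have := row_identity_dominated row_identity_adj jk lj; rewrite tj stimes0r.
  by move=> /mod_le0 z; have /sabs_eq0 -> : sabs (B j l ⊗ signed_adj l) = SZero
    by rewrite sabs_signed_adjM z.
set l := succ j; have [lj nzl _ e] := succ_tight jk tj.
rewrite (bigD1 l) //= signed_adj_succ // coef_mul // splusA [⊖ _ ⊕ _]splusC.
set X := B j l ⊗ signed_adj l.
have nX : X <> SZero by move/sabs_eq0; rewrite sabs_signed_adjM => /sabs_eq0.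
apply: sbalanced_splus_mod_le; first exact: sbalanced_subxx.
apply: bigsplus_mod_le => l' /andP[l'j _].
apply: (mod_le_trans (mod_le_sabs erefl (sabs_signed_adjM _ _) (mod_le_refl _))).
apply: (mod_le_trans (row_identity_dominated row_identity_adj jk l'j)).
right; split; first exact: subxx_neq0.
by rewrite smodg_subxx /X (smodg_sabs (sabs_signed_adjM _ _)) e.
Qed.

End SignedEigenvector.

Lemma tight_succ_exists : exists succ : 'I_m.+1 -> 'I_m.+1,
  forall j, j != k -> t j <> SZero -> tight (fun i => t i) j (succ j).
Proof.
apply: (@fin_all_exists _ (fun _ => 'I_m.+1)
  (fun j l => j != k -> t j <> SZero -> tight (fun i => t i) j l)) => j.
case: (eqVneq j k) => [->|jk]; first by exists k => /eqP.
case: (eq0_dec (t j)) => [tj|tj]; first by exists k.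
by have [l tl] := row_identity_tight_exists row_identity_adj jk tj; exists l.
Qed.

Lemma signed_eigvec_exists : exists v : 'I_m.+1 -> smax G, [/\ seigvec A (A k k) v,
  forall i, sabs (v i) = sabs (t i) & forall i, ssigned (t i) -> v i = t i].
Proof.
have [succ succ_tight] := tight_succ_exists.
exists (signed_adj succ); split.
- split; first by move=> i; apply: ssigned_signed_adj.
    exists k; rewrite signed_adj_id //; [exact: adj_col_kk_neq0 | exact: ssigned_adj_col_kk].
  by move=> i; apply/nabla_shiftE/signed_adj_balanced.
- by move=> i; apply: sabs_signed_adj.
- by move=> i; apply: signed_adj_id.
Qed.

End ShiftedMatrix.
End SymmetrizedMaxPlus.

Theorem corollary5p2 (G : porderZmodType) (HG : divOAG G) (n : nat)
  (A : 'M[smax G]_n) (k : 'I_n) :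
  tpd A ->
  (* gamma_i = a_ii ordered: gamma_1 >= ... >= gamma_n *)
  (forall i j : 'I_n, (i <= j)%N -> sle (A j j) (A i i)) ->
  (* gamma = gamma_k is simple *)
  (forall i : 'I_n, A i i = A k k -> i = k) ->
  let gamma := A k k in
  let vk := fun i : 'I_n => sadj (sshift gamma A) i k in
  [/\ sweak_eigvec A gamma vk /\ ssigned (vk k) /\ vk k <> SZero,
      (exists v : 'I_n -> smax G, seigvec A gamma v /\
         (forall i, sabs (v i) = sabs (vk i)) /\
         (forall i, ssigned (vk i) -> v i = vk i)) &
      (forall v : 'I_n -> smax G, seigvec A gamma v ->
         exists lambda : smax G, ssigned lambda /\ lambda <> SZero /\
           (forall i, snabla (v i) (stimes lambda (vk i))))].
Proof.
case: n A k => [|m] A k; first by case: k.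
(* The ordering of the diagonal entries plays no role. *)
move=> tpdA _ simple_k gamma vk.
have svk : ssigned (vk k) by apply: ssigned_adj_col_kk.
have nvk : vk k <> SZero by apply: adj_col_kk_neq0.
split.
- split=> //; split; first by exists k.
  by move=> i; apply/nabla_shiftE/adj_col_balanced.
- by have [v [? ? ?]] := signed_eigvec_exists HG tpdA simple_k; exists v.
- move=> v [vs vnz veig]; have vb i : sbalanced (smulv (sshift gamma A) v i).
    exact/(nabla_shiftE HG).
  exists (lambda A k v); split; first exact: ssigned_lambda.
  split; first exact: lambda_neq0.
  by move=> i; apply: eigvec_nabla_adj.
Qed.
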